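(* Let $n\ge1$ players all have the same valuation $v$ on a finite set of goods $M$. Then every leximin++ solution is EFX. That is, any allocation $A$ for which there is no allocation $B$ with $A\prec_{++}B$ is EFX. In particular, an EFX allocation always exists for identical general valuations.
   Context: A valuation is a function $v:2^M\to\mathbb{R}_{\ge0}$ with $v(\emptyset)=0$ that is monotone: $v(S)\le v(T)$ whenever $S\subseteq T$. An allocation is an ordered partition $(A_1,\dots,A_n)$ of $M$; parts may be empty. It is EFX if for all players $i,j$ and every $g\in A_j$ we have $v_i(A_i)\ge v_i(A_j\setminus\{g\})$. For an allocation $A$, let $X^A$ be the ordering of the players by increasing utility $v_i(A_i)$, with ties broken by increasing player index. The leximin++ comparison is defined as follows. For allocations $A$ and $B$, scan $\ell=1,\dots,n$, and let $i=X^A_\ell$ and $j=X^B_\ell$. - If $v_i(A_i)\ne v_j(B_j)$, stop: $A\prec_{++}B$ holds if and only if $v_i(A_i)<v_j(B_j)$. - Otherwise, if $|A_i|\ne|B_j|$, stop: $A\prec_{++}B$ holds if and only if $|A_i|<|B_j|$. - Otherwise continue to $\ell+1$. If the scan finishes without stopping, then $A\prec_{++}B$ is false. A leximin++ solution is an allocation $A$ that is maximal for this comparison: there is no allocation $B$ with $A\prec_{++}B$. *)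

From HB Require Import structures.
From mathcomp Require Import all_boot all_order all_algebra.
Set Implicit Arguments. Unset Strict Implicit. Unset Printing Implicit Defensive.
Import Order.TTheory GRing.Theory Num.Theory.
Local Open Scope ring_scope.

Section Defs.
Variables (R : realDomainType) (M : finType) (n : nat).

Definition is_valuation (v : {set M} -> R) : Prop :=
  [/\ v set0 = 0, (forall S : {set M}, 0 <= v S) & (forall S T : {set M}, S \subset T -> v S <= v T)].

Definition is_allocation (A : 'I_n -> {set M}) : Prop :=
  (forall i j : 'I_n, i != j -> [disjoint A i & A j]) /\
  (forall g : M, exists i : 'I_n, g \in A i).

Definition EFX (v : {set M} -> R) (A : 'I_n -> {set M}) : Prop :=
  forall (i j : 'I_n) (g : M), g \in A j -> v (A j :\ g) <= v (A i).

Definition player_le (v : {set M} -> R) (A : 'I_n -> {set M}) : rel 'I_n :=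
  fun i j => (v (A i) < v (A j)) || ((v (A i) == v (A j)) && (i <= j)%N).

Definition XA (v : {set M} -> R) (A : 'I_n -> {set M}) : seq 'I_n :=
  sort (player_le v A) (enum 'I_n).

Fixpoint lexpp_scan (s t : seq (R * nat)) : bool :=
  match s, t with
  | x :: s', y :: t' =>
      if x.1 != y.1 then x.1 < y.1
      else if x.2 != y.2 then (x.2 < y.2)%N
      else lexpp_scan s' t'
  | _, _ => false
  end.

Definition profile (v : {set M} -> R) (A : 'I_n -> {set M}) : seq (R * nat) :=
  [seq (v (A i), #|A i|) | i <- XA v A].

Definition lexpp_lt (v : {set M} -> R) (A B : 'I_n -> {set M}) : bool :=
  lexpp_scan (profile v A) (profile v B).

Definition leximinpp (v : {set M} -> R) (A : 'I_n -> {set M}) : Prop :=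
  is_allocation A /\ ~ (exists B, is_allocation B /\ lexpp_lt v A B).

End Defs.

From HB Require Import structures.
From mathcomp Require Import all_boot all_order all_algebra.
From Stdlib Require Import FunctionalExtensionality.
Set Implicit Arguments.
Unset Strict Implicit.
Unset Printing Implicit Defensive.
Import Order.TTheory GRing.Theory Num.Theory.
Local Open Scope ring_scope.

(* If a leximin++ solution A is not EFX, some player would envy a bundle A_j
   even after a good g is removed from it.  Let k be the last player, in the
   order X^A, among those of least utility a, and move g from j to k.  The
   players ranked before k keep their bundles, k keeps utility at least a and
   gains a good, and every other player ends with utility above a (j because
   of the envy, using monotonicity).  So the transfer is strictly better for
   the leximin++ comparison, a contradiction.  Existence: the comparison is a
   strict order on the finitely many allocations, hence has a maximal
   element. *)

Section SortFacts.
Variables (T : eqType) (r : rel T).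
Hypotheses (r_total : total r) (r_trans : transitive r) (r_anti : antisymmetric r).

Lemma sort_cat_filter (L : pred T) (s : seq T) :
  (forall x y, x \in s -> y \in s -> L x -> ~~ L y -> r x y) ->
  sort r s = sort r (filter L s) ++ sort r (filter (predC L) s).
Proof.
move=> hL; apply: (sorted_eq r_trans r_anti); first exact: sort_sorted.
- rewrite sorted_pairwise // pairwise_cat -!sorted_pairwise // !sort_sorted // !andbT.
  apply/allrelP => x y; rewrite !mem_sort !mem_filter => /andP[Lx xs] /andP[Ly ys].
  exact: hL.
- rewrite perm_sort -(perm_filterC L s).
  by apply: perm_cat; rewrite perm_sym perm_sort.
Qed.

Lemma sort_min_head (s : seq T) (x : T) :
  x \in s -> (forall y, y \in s -> r x y) -> exists t, sort r s = x :: t.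
Proof.
move=> xs xmin; have := mem_sort r s x; rewrite xs.
case E: (sort r s) => [|h t] //; rewrite inE => /orP[/eqP->|xt]; first by exists t.
have hs : h \in s by rewrite -(mem_sort r) E mem_head.
have /allP/(_ x xt) rhx : all (r h) t.
  by apply: order_path_min => //; have := sort_sorted r_total s; rewrite E.
by exists t; rewrite (@r_anti x h) ?xmin ?rhx.
Qed.

Lemma eq_in_sort (r' : rel T) (s : seq T) :
  total r' -> {in s &, r =2 r'} -> sort r s = sort r' s.
Proof.
move=> r'_total rr'; apply: (sorted_eq r_trans r_anti); first exact: sort_sorted.
- rewrite (@eq_in_sorted _ [pred x | x \in s] r r') ?sort_sorted //.
  by apply/allP => x; rewrite mem_sort.
- by rewrite perm_sort perm_sym perm_sort.
Qed.

End SortFacts.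

Lemma ex_maximal (T : finType) (lt : rel T) (P : pred T) (x0 : T) :
  irreflexive lt -> transitive lt -> P x0 ->
  exists2 x, P x & forall y, P y -> ~~ lt x y.
Proof.
move=> lt_irr lt_trans Px0.
have [x Px xmin] := arg_minnP (fun x => #|[set y | P y && lt x y]|) Px0.
exists x => // y Py; apply/negP => lt_xy.
suff : (#|[set z | P z && lt y z]| < #|[set z | P z && lt x z]|)%N.
  by rewrite ltnNge xmin.
apply: proper_card; apply/properP; split.
- apply/subsetP => z; rewrite !inE => /andP[-> /=]; exact: lt_trans.
- by exists y; rewrite !inE ?Py ?lt_xy ?lt_irr ?andbF.
Qed.

Section LexScan.
Variable R : realDomainType.

Definition lexpair_lt (x y : R * nat) : bool :=
  (x.1 < y.1) || ((x.1 == y.1) && (x.2 < y.2)%N).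

Lemma lexpp_scan_cat (u s t : seq (R * nat)) (x y : R * nat) :
  lexpair_lt x y -> lexpp_scan (u ++ x :: s) (u ++ y :: t).
Proof.
elim: u => [|z u IH] /=; last by move=> xy; rewrite !eqxx /= IH.
case/orP => [x1y1|/andP[/eqP x1y1 x2y2]]; first by rewrite (lt_eqF x1y1) x1y1.
by rewrite x1y1 eqxx /= (ltn_eqF x2y2) x2y2.
Qed.

Lemma lexpp_scan_irr (s : seq (R * nat)) : lexpp_scan s s = false.
Proof. by elim: s => //= x s IH; rewrite !eqxx. Qed.

Lemma lexpp_scan_trans (s t u : seq (R * nat)) :
  lexpp_scan s t -> lexpp_scan t u -> lexpp_scan s u.
Proof.
elim: s t u => [|x s IH] [|y t] [|z u] //=.
case: (eqVneq x.1 y.1) => [->|_] /=; last first.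
  move=> x1y1; case: (eqVneq y.1 z.1) => [<-|_ /(lt_trans x1y1) x1z1] /=.
    by rewrite (lt_eqF x1y1) x1y1.
  by rewrite (lt_eqF x1z1) x1z1.
case: (eqVneq y.1 z.1) => [->|] //=.
case: (eqVneq x.2 y.2) => [->|_] /=; first by case: (y.2 != z.2) => //; exact: IH.
move=> x2y2; case: (eqVneq y.2 z.2) => [<-|_ /(ltn_trans x2y2) x2z2] /=.
  by rewrite (ltn_eqF x2y2).
by rewrite (ltn_eqF x2z2).
Qed.

End LexScan.

Section PlayerOrder.
Variables (R : realDomainType) (M : finType) (n : nat) (v : {set M} -> R).
Implicit Types (A B : 'I_n -> {set M}) (L : pred 'I_n).

Lemma player_le_total A : total (player_le v A).
Proof.
move=> i j; rewrite /player_le.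
by case: (ltgtP (v (A i)) (v (A j))) => //= _; rewrite leq_total.
Qed.

Lemma player_le_trans A : transitive (player_le v A).
Proof.
move=> j i k; rewrite /player_le.
move=> /orP[ij|/andP[/eqP eij ij]] /orP[jk|/andP[/eqP ejk jk]].
- by rewrite (lt_trans ij jk).
- by rewrite -ejk ij.
- by rewrite eij jk.
- by rewrite eij ejk eqxx (leq_trans ij jk) orbT.
Qed.

Lemma player_le_anti A : antisymmetric (player_le v A).
Proof.
move=> i j /andP[/orP[ij|/andP[/eqP ij lij]] /orP[ji|/andP[/eqP ji lji]]].
- by move: (lt_trans ij ji); rewrite ltxx.
- by rewrite ji ltxx in ij.
- by rewrite ij ltxx in ji.
- by apply/val_inj/eqP; rewrite eqn_leq lij lji.
Qed.

Lemma player_leW A i j :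
  v (A i) <= v (A j) -> (v (A i) == v (A j) -> (i <= j)%N) -> player_le v A i j.
Proof. by rewrite /player_le le_eqVlt => /orP[eij|->] // /(_ eij) ij; rewrite eij ij orbT. Qed.

Lemma XA_cat A L :
  (forall x y, L x -> ~~ L y -> player_le v A x y) ->
  XA v A = sort (player_le v A) (filter L (enum 'I_n)) ++
           sort (player_le v A) (filter (predC L) (enum 'I_n)).
Proof.
move=> hL; apply: sort_cat_filter => [||| x y _ _]; last exact: hL.
- exact: player_le_total.
- exact: player_le_trans.
- exact: player_le_anti.
Qed.

Lemma lexpp_lt_of_prefix A B L (k : 'I_n) :
  (forall p, L p -> A p = B p) ->
  (forall x y, L x -> ~~ L y -> player_le v A x y) ->
  (forall x y, L x -> ~~ L y -> player_le v B x y) ->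
  ~~ L k -> (forall q, ~~ L q -> player_le v A k q) ->
  (forall q, ~~ L q -> lexpair_lt (v (A k), #|A k|) (v (B q), #|B q|)) ->
  lexpp_lt v A B.
Proof.
move=> AB splitA splitB Lk kmin kB.
set low := filter L (enum 'I_n); set high := filter (predC L) (enum 'I_n).
have k_high : k \in high by rewrite mem_filter /= Lk mem_enum.
have low_eq : sort (player_le v B) low = sort (player_le v A) low.
  apply: eq_in_sort; [exact: player_le_total | exact: player_le_trans |
    exact: player_le_anti | exact: player_le_total |].
  by move=> x y; rewrite !mem_filter => /andP[Lx _] /andP[Ly _]; rewrite /player_le !AB.
have [t XAk] : exists t, sort (player_le v A) high = k :: t.
  apply: sort_min_head; [exact: player_le_total | exact: player_le_trans |
    exact: player_le_anti | exact: k_high |].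
  by move=> q; rewrite mem_filter => /andP[Lq _]; exact: kmin.
rewrite /lexpp_lt /profile (XA_cat splitA) (XA_cat splitB) low_eq XAk !map_cat.
have -> : [seq (v (B p), #|B p|) | p <- sort (player_le v A) low] =
          [seq (v (A p), #|A p|) | p <- sort (player_le v A) low].
  by apply/eq_in_map => p; rewrite mem_sort mem_filter => /andP[/AB-> _].
case E: (sort (player_le v B) high) => [|h w].
  by move: k_high; rewrite -(mem_sort (player_le v B)) E.
have : h \in high by rewrite -(mem_sort (player_le v B)) E mem_head.
by rewrite mem_filter => /andP[Lh _]; apply: lexpp_scan_cat; exact: kB.
Qed.

End PlayerOrder.

Section Transfer.
Variables (M : finType) (n : nat).
Implicit Type A : 'I_n -> {set M}.

(* Removing g from every other bundle takes it from its unique owner. *)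
Definition transfer A (g : M) (k : 'I_n) (p : 'I_n) : {set M} :=
  if p == k then g |: A p else A p :\ g.

Lemma transfer_id A g k p : p != k -> g \notin A p -> transfer A g k p = A p.
Proof.
by rewrite /transfer => /negbTE-> gAp; apply/setDidPl; rewrite disjoint_sym disjoints1.
Qed.

Lemma transfer_allocation A g k : is_allocation A -> is_allocation (transfer A g k).
Proof.
case=> disjA coverA; split => [p q pq|x].
- have dA x : x \in A p -> x \in A q -> False.
    by move=> xp xq; move: (disjointFr (disjA p q pq) xp); rewrite xq.
  apply/pred0P => x /=; rewrite /transfer.
  case: ifP => [/eqP pk|_]; case: ifP => [/eqP qk|_]; rewrite !inE.
  + by move: pq; rewrite pk qk eqxx.
  1-3: by case: (eqVneq x g) => //= _; case: (boolP (x \in A p)) => // /dA xq;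
    apply/negP => /xq.
- case: (eqVneq x g) => [->|xg]; first by exists k; rewrite /transfer eqxx setU11.
  have [p xp] := coverA x; exists p; rewrite /transfer.
  by case: ifP; rewrite !inE ?xg ?xp ?orbT.
Qed.

End Transfer.

Section Leximin.
Variables (R : realDomainType) (M : finType) (n : nat) (v : {set M} -> R).
Hypothesis v_mono : forall S T : {set M}, S \subset T -> v S <= v T.

Section Improvement.
Variables (A : 'I_n -> {set M}) (j k : 'I_n) (g : M).
Hypotheses (A_alloc : is_allocation A) (gAj : g \in A j).
Hypotheses (k_min : forall p, v (A k) <= v (A p))
           (k_last : forall p, v (A p) = v (A k) -> (p <= k)%N)
           (k_envies : v (A k) < v (A j :\ g)).

Let B := transfer A g k.
(* The players ranked before k in X^A. *)
Let low p := (v (A p) == v (A k)) && (p < k)%N.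

Let lt_k_j : v (A k) < v (A j).
Proof. by apply: (lt_le_trans k_envies); apply: v_mono; exact: subD1set. Qed.

Let j_neq_k : j != k.
Proof. by apply: contraTneq lt_k_j => ->; rewrite ltxx. Qed.

Let g_notin p : p != j -> g \notin A p.
Proof. by move=> pj; rewrite (disjointFl (A_alloc.1 p j pj) gAj). Qed.

Let B_low p : low p -> B p = A p.
Proof.
case/andP=> /eqP vp pk; apply: transfer_id; first by rewrite neq_ltn pk.
by apply: g_notin; apply: contraTneq lt_k_j => <-; rewrite vp ltxx.
Qed.

Let lt_k_high q : ~~ low q -> q != k -> v (A k) < v (A q).
Proof.
move=> lowq qk; rewrite lt_neqAle k_min andbT; apply: contra lowq => /eqP vq.
by rewrite /low -vq eqxx ltn_neqAle qk (k_last (esym vq)).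
Qed.

Let B_high q : ~~ low q -> q != k -> v (A k) < v (B q).
Proof.
move=> lowq qk; case: (eqVneq q j) => [qj|qj]; last first.
  by rewrite /B transfer_id ?g_notin //; exact: lt_k_high.
by rewrite /B /transfer (negbTE qk) qj.
Qed.

Let B_k : B k = g |: A k.
Proof. by rewrite /B /transfer eqxx. Qed.

Lemma lexpp_lt_transfer : lexpp_lt v A B.
Proof.
have k_high : ~~ low k by rewrite /low ltnn andbF.
have Bk_ge : v (A k) <= v (B k) by rewrite B_k; apply: v_mono; exact: subsetU1.
apply: (lexpp_lt_of_prefix (L := low) (k := k)) => //.
- by move=> p /B_low.
- move=> x y /andP[/eqP vx xk] lowy; apply: player_leW; rewrite vx.
    by case: (eqVneq y k) => [->|yk] //; exact/ltW/lt_k_high.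
  case: (eqVneq y k) => [-> _|yk]; first exact: ltnW.
  by rewrite (lt_eqF (lt_k_high lowy yk)).
- move=> x y /[dup] lowx /andP[/eqP vx xk] lowy.
  apply: player_leW; rewrite (B_low lowx) vx.
    by case: (eqVneq y k) => [->|yk] //; exact/ltW/B_high.
  case: (eqVneq y k) => [-> _|yk]; first exact: ltnW.
  by rewrite (lt_eqF (B_high lowy yk)).
- move=> q lowq; apply: player_leW; first exact: k_min.
  by case: (eqVneq q k) => [-> _|qk] //; rewrite (lt_eqF (lt_k_high lowq qk)).
- move=> q lowq; rewrite /lexpair_lt /=.
  case: (eqVneq q k) => [->|qk]; last by rewrite B_high.
  rewrite lt_neqAle Bk_ge andbT; case: eqVneq => //= _.
  by rewrite B_k cardsU1 g_notin 1?eq_sym.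
Qed.

End Improvement.

Lemma leximinpp_EFX (A : 'I_n -> {set M}) : leximinpp v A -> EFX v A.
Proof.
case=> A_alloc A_max i j g gAj; rewrite leNgt; apply/negP => envy.
have [p0 _ p0_min] := arg_minP (fun p => v (A p)) (isT : xpredT i).
have [k /eqP vk k_last] := arg_maxnP val (eqxx (v (A p0)) : (fun p => v (A p) == v (A p0)) p0).
apply: A_max; exists (transfer A g k); split; first exact: transfer_allocation.
apply: (lexpp_lt_transfer A_alloc gAj) => [p|p vp|].
- by rewrite vk; exact: p0_min.
- by apply: k_last; rewrite vp vk.
- by rewrite vk; exact: le_lt_trans (p0_min i isT) envy.
Qed.

End Leximin.

Section Existence.
Variables (R : realDomainType) (M : finType) (n : nat) (v : {set M} -> R).

Definition is_allocationb (A : 'I_n -> {set M}) : bool :=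
  [forall i, forall j, (i != j) ==> [disjoint A i & A j]] &&
  [forall g, [exists i, g \in A i]].

Lemma is_allocationP (A : 'I_n -> {set M}) : reflect (is_allocation A) (is_allocationb A).
Proof.
apply: (iffP andP) => [[/forallP dA /forallP cA]|[dA cA]]; split.
- by move=> i j ij; move/forallP/(_ j): (dA i); rewrite ij.
- by move=> g; have /existsP := cA g.
- by apply/forallP => i; apply/forallP => j; apply/implyP; exact: dA.
- by apply/forallP => g; apply/existsP; exact: cA.
Qed.

Lemma leximinpp_exists : (0 < n)%N -> exists A : 'I_n -> {set M}, leximinpp v A.
Proof.
move=> n_gt0; pose i0 : 'I_n := Ordinal n_gt0.
pose F0 : {ffun 'I_n -> {set M}} := [ffun p => if p == i0 then setT else set0].
have F0_alloc : is_allocationb F0.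
  apply/is_allocationP; split => [p q pq|g]; last by exists i0; rewrite ffunE eqxx inE.
  rewrite !ffunE; case: (eqVneq p i0) => [pi0|_]; last by rewrite disjoints_subset sub0set.
  have qi0 : q != i0 by rewrite -pi0 eq_sym.
  by rewrite (negbTE qi0) disjoint_sym disjoints_subset sub0set.
have [F /is_allocationP F_alloc F_max] :=
  @ex_maximal _ (fun F G : {ffun 'I_n -> {set M}} => lexpp_lt v F G)
    (fun F : {ffun 'I_n -> {set M}} => is_allocationb F) F0
    (fun F => lexpp_scan_irr _) (fun G F H => @lexpp_scan_trans _ _ _ _) F0_alloc.
exists F; split => // -[B [B_alloc FB]].
have eB : (finfun B : 'I_n -> {set M}) = B := functional_extensionality _ _ (ffunE B).
by have := F_max (finfun B); rewrite eB FB => /(_ (introT (is_allocationP B) B_alloc)).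
Qed.

End Existence.

Theorem theorem4p2 (R : realDomainType) (M : finType) (n : nat)
  (v : {set M} -> R) :
  (1 <= n)%N -> is_valuation v ->
  (forall A : 'I_n -> {set M}, leximinpp v A -> EFX v A) /\
  (exists A : 'I_n -> {set M}, is_allocation A /\ EFX v A).
Proof.
move=> n_gt0 [_ _ v_mono]; have EFX_of := leximinpp_EFX v_mono.
split; first exact: EFX_of.
have [A A_leximin] := leximinpp_exists v n_gt0.
by exists A; split; [case: A_leximin | apply: EFX_of].
Qed.
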